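(* Let $k,n\ge1$, $m=kn-1$, and let $\varphi\in C^\infty(\mathbb P_m\mathbb C)$ be $g$-admissible and $G_{n,k}$-invariant with $\sup_{\mathbb P_m\mathbb C}\varphi=0$. Then $(\varphi-\psi)([1,\dots,1])\ge0$.
   Context: Homogeneous coordinates on $\mathbb P_m\mathbb C$, $m=kn-1$, are written $[z_0,\dots,z_m]=[Z_0,\dots,Z_{k-1}]$ with blocks $Z_h=(z_{hn},\dots,z_{(h+1)n-1})$. The metric $g$ has components $g_{\lambda\bar\mu}=a_m\,\partial^2\ln(1+|z_1|^2+\cdots+|z_m|^2)/\partial z_\lambda\partial\bar z_\mu$ in the chart $\{z_0=1\}$, for a fixed $a_m>0$. $\varphi$ is $g$-admissible if $g_{\lambda\bar\mu}+\partial^2\varphi/\partial z_\lambda\partial\bar z_\mu$ is positive definite everywhere. $G_{n,k}$ is the automorphism group generated by swaps of two blocks $Z_i,Z_j$, multiplication of a single coordinate $z_p$ by $e^{i\theta}$, and transpositions of two coordinates in the same block. $\psi([z_0,\dots,z_m])=\ln\big((|z_0|\cdots|z_m|)^{2a_m/(m+1)}/(|z_0|^2+\cdots+|z_m|^2)^{a_m}\big)$, so that $\psi([1,\dots,1])=-a_m\ln(m+1)$. *)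

From HB Require Import structures.
From mathcomp Require Import all_boot all_order all_algebra.
From mathcomp Require Import all_classical all_reals all_analysis.
From mathcomp Require Import all_fingroup complex zify.
Import Order.TTheory GRing.Theory Num.Theory numFieldNormedType.Exports.

Set Implicit Arguments.
Unset Strict Implicit.
Unset Printing Implicit Defensive.

Local Open Scope ring_scope.
Local Open Scope complex_scope.

Section Defs.
Variable R : realType.
Local Notation C := R[i].

Definition abs2 (z : C) : R := (complex.Re z) ^+ 2 + (complex.Im z) ^+ 2.
Definition cabs (z : C) : R := Num.sqrt (abs2 z).

Definition iterD {V : normedModType R} (vs : seq V) (f : V -> R) : V -> R :=
  foldr (fun v g => fun x => derive g x v) f vs.

Definition smooth {V : normedModType R} (f : V -> R) : Prop :=
  forall vs : seq V, continuous (iterD vs f) /\ forall x v, derivable (iterD vs f) x v.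

Definition toC (M : nat) (xy : 'rV[R]_M * 'rV[R]_M) : 'rV[C]_M :=
  \row_i ((xy.1 0 i) +i* (xy.2 0 i)).

Definition ex (M : nat) (i : 'I_M) : 'rV[R]_M * 'rV[R]_M := (delta_mx 0 i, 0).
Definition ey (M : nat) (i : 'I_M) : 'rV[R]_M * 'rV[R]_M := (0, delta_mx 0 i).

Definition D2 (M : nat) (F : 'rV[R]_M * 'rV[R]_M -> R) (u v : 'rV[R]_M * 'rV[R]_M) x : R :=
  derive (fun y => derive F y v) x u.

(* complex Hessian  (d^2 F / dz_l d\bar z_m)_{l,m}  via the Wirtinger operators
   d/dz = (d/dx - i d/dy)/2,  d/d\bar z = (d/dx + i d/dy)/2 *)
Definition cplx_hessian (M : nat) (F : 'rV[R]_M * 'rV[R]_M -> R) xy : 'M[C]_M :=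
  \matrix_(l, m)
    (((D2 F (ex l) (ex m) xy + D2 F (ey l) (ey m) xy) / 4%:R) +i*
     ((D2 F (ex l) (ey m) xy - D2 F (ey l) (ex m) xy) / 4%:R)).

Definition posdef (M : nat) (H : 'M[C]_M) : Prop :=
  forall v : 'rV[C]_M, v != 0 ->
    0 < \sum_(l < M) \sum_(m < M) H l m * v 0 l * (v 0 m)^*.

(* A function on P_m C is a function Phi on C^N that is invariant under
   nonzero scalings (its value at 0 is irrelevant). *)
Definition homogeneous0 (N : nat) (Phi : 'rV[C]_N -> R) : Prop :=
  forall (c : C) (z : 'rV[C]_N), c != 0 -> Phi (c *: z) = Phi z.

(* the standard affine chart {z_j = 1}: the coordinates other than z_j *)
Definition chart (N : nat) (j : 'I_N) (w : 'rV[C]_N.-1) : 'rV[C]_N :=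
  \row_p (if unlift j p is Some i then w 0 i else 1).

Definition phi_loc (N : nat) (Phi : 'rV[C]_N -> R) (j : 'I_N) :
  'rV[R]_N.-1 * 'rV[R]_N.-1 -> R :=
  fun xy => Phi (chart j (toC xy)).

(* local potential of g + dd^c phi in the chart {z_j = 1}:
   a * ln(1 + |w_1|^2 + ... + |w_m|^2) + phi *)
Definition pot_loc (N : nat) (a : R) (Phi : 'rV[C]_N -> R) (j : 'I_N) :
  'rV[R]_N.-1 * 'rV[R]_N.-1 -> R :=
  fun xy => a * ln (1 + \sum_(i < N.-1) abs2 (toC xy 0 i)) + phi_loc Phi j xy.

Definition smooth_on_P (N : nat) (Phi : 'rV[C]_N -> R) : Prop :=
  forall j : 'I_N, smooth (phi_loc Phi j).

(* g-admissible: (g_{l \bar m} + d^2 phi/dz_l d\bar z_m) positive definite everywhere,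
   i.e. at every point of every standard affine chart *)
Definition admissible (N : nat) (a : R) (Phi : 'rV[C]_N -> R) : Prop :=
  forall (j : 'I_N) xy, posdef (cplx_hessian (pot_loc a Phi j) xy).

Definition bswap_nat (n : nat) (i j : nat) (p : nat) : nat :=
  (if p %/ n == i then j * n + p %% n
  else if p %/ n == j then i * n + p %% n else p)%N.

Lemma bswap_nat_lt (k n : nat) (i j : 'I_k) (p : 'I_(k * n)) :
  (bswap_nat n i j p < k * n)%N.
Proof.
have lt_pkn := ltn_ord p.
move: (nat_of_ord p) lt_pkn => {}p lt_pkn.
have n0 : (0 < n)%N by move: lt_pkn; case: (posnP n) => [->|//]; rewrite muln0.
have aux (h : 'I_k) : (h * n + p %% n < k * n)%N.
  apply: (@leq_trans (h * n + n)%N); first by rewrite ltn_add2l ltn_pmod.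
  by rewrite -mulSnr leq_mul2r ltn_ord orbT.
rewrite /bswap_nat; case: ifP => _; first exact: aux.
by case: ifP => _; [exact: aux | exact: lt_pkn].
Qed.

(* the permutation of indices swapping blocks Z_i and Z_j *)
Definition bswap_idx (k n : nat) (i j : 'I_k) (p : 'I_(k * n)) : 'I_(k * n) :=
  Ordinal (bswap_nat_lt i j p).

Definition bswap_act (k n : nat) (i j : 'I_k) (z : 'rV[C]_(k * n)) : 'rV[C]_(k * n) :=
  \row_p z 0 (bswap_idx i j p).

Definition rot_act (N : nat) (p : 'I_N) (theta : R) (z : 'rV[C]_N) : 'rV[C]_N :=
  \row_q (if q == p then (cos theta +i* sin theta) * z 0 q else z 0 q).

Definition transp_act (N : nat) (p q : 'I_N) (z : 'rV[C]_N) : 'rV[C]_N :=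
  \row_r z 0 (tperm p q r).

(* G_{n,k}: the group generated by the above (each generator's inverse is again a
   generator, so the generated group is the closure under composition) *)
Inductive Gnk (k n : nat) : ('rV[C]_(k * n) -> 'rV[C]_(k * n)) -> Prop :=
| Gnk_id : @Gnk k n id
| Gnk_bswap (i j : 'I_k) : @Gnk k n (bswap_act i j)
| Gnk_rot (p : 'I_(k * n)) (theta : R) : @Gnk k n (rot_act p theta)
| Gnk_transp (p q : 'I_(k * n)) : (p %/ n)%N = (q %/ n)%N -> @Gnk k n (transp_act p q)
| Gnk_comp f g : @Gnk k n f -> @Gnk k n g -> @Gnk k n (f \o g).

Definition Gnk_invariant (k n : nat) (Phi : 'rV[C]_(k * n) -> R) : Prop :=
  forall f, @Gnk k n f -> forall z, Phi (f z) = Phi z.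

Definition psi (N : nat) (a : R) (z : 'rV[C]_N) : R :=
  ln ((\prod_(p < N) cabs (z 0 p)) `^ (2 * a / N%:R)
      / (\sum_(p < N) abs2 (z 0 p)) `^ a).

Definition onesC (N : nat) : 'rV[C]_N := \row_p 1.

End Defs.

From mathcomp Require Import all_boot all_order all_algebra.
From mathcomp Require Import all_classical all_reals all_analysis.
From mathcomp Require Import complex ring lra.
Import Order.TTheory GRing.Theory Num.Theory numFieldNormedType.Exports.

Set Implicit Arguments.
Unset Strict Implicit.
Unset Printing Implicit Defensive.

Local Open Scope ring_scope.
Local Open Scope classical_set_scope.

(* In the chart {z_j = 1} the local potential U = a ln(1 + |w|^2) + phi of
   g + dd^c phi is invariant under rotating a single coordinate w_l (by the
   G_{n,k}-invariance of phi), and admissibility makes its Laplacian in w_l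
   positive.  A radial function with positive Laplacian cannot have an
   interior maximum on the unit disc, so moving the coordinates one at a time
   onto 1 gives U(w) <= U(1,...,1) whenever all |w_l| <= 1.  Every point of
   P_m C has such a representative w in the chart of its largest coordinate,
   and the log term is nonnegative, hence
   phi <= phi([1,...,1]) + a ln(m+1) = (phi - psi)([1,...,1]);
   taking the supremum of phi gives the claim. *)

Section DirectionalDerivatives.
Variables (R : realType) (V : normedModType R).
Implicit Types (f g : V -> R) (p q v : V).

Definition derive2 f q v : R := derive (fun p => derive f p v) q v.

Definition twice_derivable f v : Prop :=
  forall q, derivable f q v /\ derivable (fun p => derive f p v) q v.

Lemma twice_derivableD f g v :
  twice_derivable f v -> twice_derivable g v -> twice_derivable (f + g) v.
Proof.
move=> df dg q; have [df1 df2] := df q; have [dg1 dg2] := dg q.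
split; first exact: derivableD.
have -> : (fun p => derive (f + g) p v) = (fun p => derive f p v) + (fun p => derive g p v).
  by apply: funext => p; rewrite deriveD //; [case: (df p) | case: (dg p)].
exact: derivableD.
Qed.

Lemma line_difference_quotient f p v t :
  (fun h : R => h^-1 *: (((fun s => f (s *: v + p)) \o shift t) (h *: 1)
                         - f (t *: v + p)))
  = (fun h => h^-1 *: ((f \o shift (t *: v + p)) (h *: v) - f (t *: v + p))).
Proof. by apply: funext => h /=; rewrite [h%:A]mulr1 scalerDl addrA. Qed.

Lemma derive_line f p v t :
  derive (fun s : R => f (s *: v + p)) t 1 = derive f (t *: v + p) v.
Proof. by rewrite /derive line_difference_quotient. Qed.

Lemma derivable_line f p v t :
  derivable (fun s : R => f (s *: v + p)) t 1 = derivable f (t *: v + p) v.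
Proof. by rewrite /derivable line_difference_quotient. Qed.

Lemma derive_line_fun f p v :
  (fun t => derive (fun s : R => f (s *: v + p)) t 1)
  = (fun t => (fun q => derive f q v) (t *: v + p)).
Proof. by apply: funext => t; rewrite derive_line. Qed.

Lemma smooth_twice_derivable f v : smooth f -> twice_derivable f v.
Proof. by move=> sf q; split; [case: (sf [::]) | case: (sf [:: v])]. Qed.

End DirectionalDerivatives.

Section Lines.
Variables (R : realType) (V : normedModType R).
Implicit Types (f : V -> R) (p v : V).

Lemma derive2_line f p v t :
  derive2 (fun s : R => f (s *: v + p)) t 1 = derive2 f (t *: v + p) v.
Proof. by rewrite /derive2 derive_line_fun (derive_line (fun q => derive f q v)). Qed.

Lemma twice_derivable_lineP f v :
  twice_derivable f v <-> forall p, twice_derivable (fun s : R => f (s *: v + p)) 1.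
Proof.
split=> [df p t | dl q].
  by rewrite derive_line_fun derivable_line (derivable_line (fun q => derive f q v)).
have := dl q 0.
by rewrite derive_line_fun derivable_line (derivable_line (fun q => derive f q v)) scale0r add0r.
Qed.

End Lines.

Section MaximumPrinciple.
Variable R : realType.

Lemma derive2_le0_at_local_max (h : R -> R) (x0 d : R) : 0 < d ->
  (forall t, `|t - x0| < d -> h t <= h x0) ->
  twice_derivable h 1 -> derive2 h x0 1 <= 0.
Proof.
move=> d0 hmax dh.
have h'0 : derive h x0 1 = 0.
  suff : is_derive x0 1 h 0 by move=> ?; rewrite derive_val.
  apply: (@derive1_at_max _ h (x0 - d) (x0 + d)); first by lra.
  - by move=> t _; case: (dh t).
  - by rewrite in_itv /=; apply/andP; split; lra.
  move=> t; rewrite in_itv /= => /andP[t1 t2]; apply: hmax.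
  by rewrite ltr_norml; apply/andP; split; lra.
rewrite leNgt; apply/negP => h''0.
(* h'(x0) = 0 < h''(x0) makes h' positive just right of x0, and then the
   mean value theorem gives h(x0 + s) > h(x0). *)
pose h' t := derive h t 1.
have [e /= e0 He] := cvgr_gt _ (dh x0).2 _ h''0.
pose s := Num.min e d / 2.
have s0 : 0 < s by rewrite divr_gt0 // lt_min e0 d0.
have [se sd] : s < e /\ s < d.
  have : Num.min e d <= e by rewrite ge_min lexx.
  have : Num.min e d <= d by rewrite ge_min lexx orbT.
  by rewrite /s; split; lra.
have h'_gt0 x : x0 < x < x0 + s -> 0 < h' x.
  move=> /andP[xa xb]; have := He (x - x0).
  rewrite /ball_ /= sub0r normrN gtr0_norm ?subr_gt0 // subr_eq0 gt_eqF; last by lra.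
  rewrite h'0 subr0 [_%:A]mulr1 subrK /GRing.scale /= pmulr_rgt0 ?invr_gt0 ?subr_gt0 //.
  by apply; lra.
have [c cin eq] := @MVT R h h' x0 (x0 + s) ltac:(lra) (fun x _ => derivableP (dh x).1)
  (derivable_within_continuous (fun x _ => (dh x).1)).
have := hmax (x0 + s); rewrite addrAC subrr add0r gtr0_norm // => /(_ sd).
move: cin; rewrite in_itv /= => /h'_gt0 c0.
have : 0 < h' c * (x0 + s - x0) by rewrite mulr_gt0 //; lra.
by rewrite -eq; lra.
Qed.

Lemma radial_le_boundary (g : R -> R -> R) :
  (forall x y, g x y = g (Num.sqrt (x ^+ 2 + y ^+ 2)) 0) ->
  (forall y, twice_derivable (fun s => g s y) 1) ->
  (forall x, twice_derivable (fun s => g x s) 1) ->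
  (forall x y, 0 < derive2 (fun s => g s y) x 1 + derive2 (fun s => g x s) y 1) ->
  forall x y, x ^+ 2 + y ^+ 2 <= 1 -> g x y <= g 1 0.
Proof.
move=> g_radial dgx dgy lap_gt0.
have [c c01 cmax] := @EVT_max R (g^~ 0) 0 1 ler01
  (derivable_within_continuous (fun x _ => (dgx 0 x).1)).
have disk_max x y : x ^+ 2 + y ^+ 2 <= 1 -> g x y <= g c 0.
  move=> xy1; rewrite g_radial; apply: cmax.
  by rewrite in_itv /= sqrtr_ge0 -(sqrtr1 R) ler_sqrt.
(* By radiality (c, 0) maximises g on the closed disc, so c < 1 would be an
   interior maximum, where both second partial derivatives are <= 0. *)
suff c_eq1 : c = 1 by move=> x y /disk_max; rewrite c_eq1.
move: c01; rewrite in_itv /= => /andP[c0 c1].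
apply/eqP; rewrite eq_le c1 /= leNgt; apply/negP => c_lt1.
have d0 : 0 < 1 - c by rewrite subr_gt0.
have gx_le0 : derive2 (g^~ 0) c 1 <= 0.
  apply: (derive2_le0_at_local_max d0) => // t; rewrite ltr_norml => /andP[t1 t2].
  by apply: disk_max; rewrite expr0n addr0; nra.
have gy_le0 : derive2 (g c) 0 1 <= 0.
  apply: (derive2_le0_at_local_max d0) => // t; rewrite subr0 ltr_norml => /andP[t1 t2].
  by apply: disk_max; nra.
have := lap_gt0 c 0; rewrite ltNge => /negP; apply.
by have := lerD gx_le0 gy_le0; rewrite addr0.
Qed.

End MaximumPrinciple.

Section LogPolynomial.
Variable R : realType.

Lemma twice_derivable_ln_horner (a : R) (p : {poly R}) :
  (forall x, 0 < p.[x]) -> twice_derivable (fun x => a * ln p.[x]) 1.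
Proof.
move=> p_gt0.
have dp (x : R) : is_derive x 1 (horner p) p^`().[x].
  by apply: DeriveDef; [exact: derivable_horner | rewrite -derive1E -derivE].
have dlnp (x : R) : is_derive x 1 (@ln R \o horner p) ((p.[x])^-1 * p^`().[x]).
  exact: is_derive1_comp (is_derive1_ln (p_gt0 x)) (dp x).
have -> : (fun x => a * ln p.[x]) = a *: (@ln R \o horner p) by [].
move=> x; split; first by apply: derivableZ; exact: ex_derive.
have -> : (fun x => derive (a *: (@ln R \o horner p)) x 1)
          = a *: ((fun x => (p.[x])^-1) * horner p^`()).
  by apply: funext => y; rewrite deriveZ ?derive_val //; exact: ex_derive.
apply: derivableZ; apply: derivableM; last exact: derivable_horner.
by apply: derivableV; [rewrite gt_eqF | exact: derivable_horner].
Qed.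

End LogPolynomial.

Section PlanarMaximum.
Variables (R : realType) (V : normedModType R).

Lemma planar_radial_le_boundary (U : V -> R) (u v p : V) :
  (forall x y, U (x *: u + y *: v + p) = U (Num.sqrt (x ^+ 2 + y ^+ 2) *: u + p)) ->
  twice_derivable U u -> twice_derivable U v ->
  (forall q, 0 < derive2 U q u + derive2 U q v) ->
  forall x y, x ^+ 2 + y ^+ 2 <= 1 -> U (x *: u + y *: v + p) <= U (u + p).
Proof.
move=> U_radial dUu dUv lap_gt0 x y xy1.
pose g x y := U (x *: u + y *: v + p).
have gx y' : (fun s => g s y') = (fun s => U (s *: u + (y' *: v + p))).
  by apply: funext => s; rewrite /g addrA.
have gy x' : (fun s => g x' s) = (fun s => U (s *: v + (x' *: u + p))).
  by apply: funext => s; rewrite /g [x' *: u + _]addrC -addrA.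
suff : g x y <= g 1 0 by rewrite /g scale1r scale0r addr0.
apply: radial_le_boundary xy1.
- by move=> x' y'; rewrite /g scale0r addr0 U_radial.
- move=> y'; have := (twice_derivable_lineP U u).1 dUu (y' *: v + p).
  by rewrite -gx.
- move=> x'; have := (twice_derivable_lineP U v).1 dUv (x' *: u + p).
  by rewrite -gy.
move=> x' y'; have := lap_gt0 (x' *: u + (y' *: v + p)).
by rewrite -derive2_line -gx (addrCA (x' *: u)) -derive2_line -gy.
Qed.

End PlanarMaximum.

Local Open Scope complex_scope.
Section Rotation.
Variable R : realType.

Lemma rotate_to_real (x y : R) : exists th : R,
  (cos th +i* sin th) * (x +i* y) = Num.sqrt (x ^+ 2 + y ^+ 2) +i* 0.
Proof.
set r := Num.sqrt (x ^+ 2 + y ^+ 2).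
have r2 : r ^+ 2 = x ^+ 2 + y ^+ 2 by rewrite sqr_sqrtr // addr_ge0 ?sqr_ge0.
have [r0|r_neq0] := eqVneq r 0.
  have /eqP : x ^+ 2 + y ^+ 2 = 0 by rewrite -r2 r0 expr0n.
  rewrite paddr_eq0 ?sqr_ge0 // !sqrf_eq0 => /andP[/eqP -> /eqP ->].
  by exists 0; rewrite r0 cos0 sin0 /=; congr (_ +i* _); ring.
have r_gt0 : 0 < r by rewrite lt_def r_neq0 sqrtr_ge0.
set u := x / r.
have u2 : 1 - u ^+ 2 = (`|y| / r) ^+ 2.
  apply: (mulIf (expf_neq0 2 r_neq0)).
  by rewrite mulrBl !expr_div_n !divfK ?expf_neq0 // real_normK ?num_real // mul1r r2; ring.
have u_itv : -1 <= u <= 1.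
  have : u ^+ 2 <= 1 by rewrite -subr_ge0 u2 sqr_ge0.
  by rewrite -(real_normK (num_real u)) expr_le1 // -ler_norml.
have sin_acos_u : sin (acos u) = `|y| / r.
  by rewrite sin_acos // u2 sqrtr_sqr ger0_norm // divr_ge0 // ltW.
have rotated th : cos th = u -> sin th = - y / r ->
    (cos th +i* sin th) * (x +i* y) = r +i* 0.
  move=> -> -> /=; rewrite /u; congr (_ +i* _); last by field.
  have -> : x / r * x - - y / r * y = r ^+ 2 / r by rewrite r2; field.
  by rewrite expr2 mulfK.
have [y_le0|y_gt0] := lerP y 0.
  by exists (acos u); apply: rotated; rewrite ?acosK ?sin_acos_u ?ler0_norm ?mulNr.
exists (- acos u); apply: rotated; first by rewrite cosN acosK.
by rewrite sinN sin_acos_u gtr0_norm // mulNr.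
Qed.

End Rotation.

Section RealCoordinates.
Variables (R : realType) (M : nat).
Implicit Types (b q : 'rV[R]_M * 'rV[R]_M) (l : 'I_M).

Definition set_coord b l (x y : R) : 'rV[R]_M * 'rV[R]_M :=
  (\row_i (if i == l then x else b.1 0 i), \row_i (if i == l then y else b.2 0 i)).

Lemma set_coordE b l x y :
  set_coord b l x y = x *: ex R l + y *: ey R l + set_coord b l 0 0.
Proof.
rewrite /set_coord /ex /ey; congr pair; apply/rowP => i; rewrite !mxE /=;
  by case: eqP; rewrite ?mulr1 ?mulr0 ?add0r ?addr0.
Qed.

Lemma le_const_coordinatewise (F : 'rV[R]_M * 'rV[R]_M -> R) :
  (forall b l x y, x ^+ 2 + y ^+ 2 <= 1 -> F (set_coord b l x y) <= F (set_coord b l 1 0)) ->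
  forall q, (forall i, q.1 0 i ^+ 2 + q.2 0 i ^+ 2 <= 1) -> F q <= F (const_mx 1, 0).
Proof.
move=> F_le q q_disk.
pose q_ s : 'rV[R]_M * 'rV[R]_M :=
  (\row_i (if (i < s)%N then 1 else q.1 0 i), \row_i (if (i < s)%N then 0 else q.2 0 i)).
have q_step (l : 'I_M) :
    q_ l = set_coord (q_ l) l (q.1 0 l) (q.2 0 l) /\ q_ l.+1 = set_coord (q_ l) l 1 0.
  split; rewrite /set_coord /q_; congr pair; apply/rowP => i; rewrite !mxE;
    case: (eqVneq i l) => [->|il]; rewrite ?ltnn ?ltnSn // ?(negbTE il) //;
    by rewrite ltnS leq_eqVlt val_eqE (negbTE il).
have le_q_ s : (s <= M)%N -> F q <= F (q_ s).
  elim: s => [_|s IHs lt_sM].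
    by rewrite (_ : q_ 0%N = q) // [RHS]surjective_pairing; congr pair; apply/rowP => i; rewrite mxE.
  have [e1 e2] := q_step (Ordinal lt_sM).
  rewrite e2; apply: le_trans (IHs (ltnW lt_sM)) _; rewrite {1}e1; exact: F_le.
have := le_q_ M (leqnn M).
by rewrite (_ : q_ M = (const_mx 1, 0)) //; congr pair; apply/rowP => i; rewrite !mxE ltn_ord.
Qed.

Lemma cplx_hessian_laplacian_gt0 (F : 'rV[R]_M * 'rV[R]_M -> R) q l :
  posdef (cplx_hessian F q) -> 0 < derive2 F q (ex R l) + derive2 F q (ey R l).
Proof.
have el_neq0 : delta_mx 0 l != 0 :> 'rV[R[i]]_M.
  by apply/negP => /eqP/matrixP/(_ 0 l); rewrite !mxE !eqxx => /eqP; rewrite oner_eq0.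
move=> /(_ _ el_neq0); rewrite (bigD1 l) //= [X in _ + X]big1 ?addr0; last first.
  by move=> i il; apply: big1 => m _; rewrite !mxE (negbTE il) mulr0 mul0r.
rewrite (bigD1 l) //= [X in _ + X]big1 ?addr0; last first.
  by move=> m ml; rewrite !mxE (negbTE ml) rmorph0 mulr0.
rewrite !mxE !eqxx rmorph1 !mulr1 ltcE /= => /andP[_].
by rewrite oppr0 mulr0 subr0 mulr1 pmulr_lgt0 // invr_gt0 ltr0n.
Qed.

Definition sum_abs2 q : R := \sum_(i < M) abs2 (toC q 0 i).

Lemma sum_abs2_ge0 q : 0 <= sum_abs2 q.
Proof. by apply: sumr_ge0 => i _; rewrite addr_ge0 ?sqr_ge0. Qed.

Lemma sum_abs2_ex q l s :
  sum_abs2 (s *: ex R l + q) = sum_abs2 q + s * (2 * q.1 0 l) + s ^+ 2.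
Proof.
rewrite /sum_abs2 (bigD1 l) //= [in RHS](bigD1 l) //=.
rewrite [in LHS](eq_bigr (fun i => abs2 (toC q 0 i))) => [|i il]; last first.
  by rewrite /abs2 /toC !mxE /= (negbTE il) !mulr0 !add0r.
set S := \sum_(i < M | _) _.
by rewrite /abs2 /toC !mxE !eqxx /=; ring.
Qed.

Lemma sum_abs2_ey q l s :
  sum_abs2 (s *: ey R l + q) = sum_abs2 q + s * (2 * q.2 0 l) + s ^+ 2.
Proof.
rewrite /sum_abs2 (bigD1 l) //= [in RHS](bigD1 l) //=.
rewrite [in LHS](eq_bigr (fun i => abs2 (toC q 0 i))) => [|i il]; last first.
  by rewrite /abs2 /toC !mxE /= (negbTE il) !mulr0 !add0r.
set S := \sum_(i < M | _) _.
by rewrite /abs2 /toC !mxE !eqxx /=; ring.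
Qed.

Lemma twice_derivable_ln_sum_abs2 (a : R) v (c : _ -> R) :
  (forall q s, sum_abs2 (s *: v + q) = sum_abs2 q + s * c q + s ^+ 2) ->
  twice_derivable (fun q => a * ln (1 + sum_abs2 q)) v.
Proof.
move=> sum_abs2_line; apply/twice_derivable_lineP => q.
pose P : {poly R} := (1 + sum_abs2 q)%:P + c q *: 'X + 'X^2.
have P_line s : P.[s] = 1 + sum_abs2 (s *: v + q).
  by rewrite /P !hornerE sum_abs2_line; ring.
have P_gt0 s : 0 < P.[s].
  by rewrite P_line (lt_le_trans ltr01) // lerDl sum_abs2_ge0.
have := twice_derivable_ln_horner a P_gt0.
suff -> : (fun s : R => a * ln (1 + sum_abs2 (s *: v + q))) = (fun s => a * ln P.[s]) by [].
by apply: funext => s; rewrite P_line.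
Qed.

End RealCoordinates.

Section Chart.
Variables (R : realType) (N : nat) (a : R) (Phi : 'rV[R[i]]_N -> R) (j : 'I_N).
Hypothesis Phi_rot : forall p th z, Phi (rot_act p th z) = Phi z.

Lemma rot_act_chart (l : 'I_N.-1) th (w : 'rV[R[i]]_N.-1) :
  rot_act (lift j l) th (chart j w)
  = chart j (\row_i (if i == l then (cos th +i* sin th) * w 0 i else w 0 i)).
Proof.
apply/rowP => q; rewrite !mxE; case: (unliftP j q) => [i ->|->].
  by rewrite (inj_eq (@lift_inj _ j)) mxE.
by rewrite (negbTE (neq_lift j l)).
Qed.

Lemma pot_loc_set_coord_radial b l x y :
  pot_loc a Phi j (set_coord b l x y)
  = pot_loc a Phi j (set_coord b l (Num.sqrt (x ^+ 2 + y ^+ 2)) 0).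
Proof.
rewrite /pot_loc; congr (_ * ln (1 + _) + _).
  apply: eq_bigr => i _; rewrite /abs2 /toC /set_coord !mxE /=.
  by case: eqP => // _; rewrite sqr_sqrtr ?addr_ge0 ?sqr_ge0 // expr0n /= addr0.
have [th rot_xy] := rotate_to_real x y.
rewrite /phi_loc -(Phi_rot (lift j l) th) rot_act_chart; congr (Phi (chart j _)).
by apply/rowP => i; rewrite /toC /set_coord !mxE /=; case: eqP => // _; rewrite rot_xy.
Qed.

Hypothesis Phi_smooth : smooth_on_P Phi.

Lemma twice_derivable_pot_loc v (c : _ -> R) :
  (forall q s, sum_abs2 (s *: v + q) = sum_abs2 q + s * c q + s ^+ 2) ->
  twice_derivable (pot_loc a Phi j) v.
Proof.
move=> sum_abs2_line.
have -> : pot_loc a Phi j = (fun q => a * ln (1 + sum_abs2 q)) + phi_loc Phi j by [].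
apply: twice_derivableD; first exact: twice_derivable_ln_sum_abs2 sum_abs2_line.
exact: smooth_twice_derivable.
Qed.

Hypothesis Phi_adm : admissible a Phi.

Lemma pot_loc_le_set_coord b l x y : x ^+ 2 + y ^+ 2 <= 1 ->
  pot_loc a Phi j (set_coord b l x y) <= pot_loc a Phi j (set_coord b l 1 0).
Proof.
set p := set_coord b l 0 0.
have pot_loc_plane x' y' : pot_loc a Phi j (x' *: ex R l + y' *: ey R l + p)
                  = pot_loc a Phi j (set_coord b l x' y').
  by rewrite [set_coord b l x' y']set_coordE.
rewrite -!pot_loc_plane scale1r scale0r addr0; apply: planar_radial_le_boundary.
- by move=> x' y'; rewrite pot_loc_plane pot_loc_set_coord_radial -pot_loc_plane scale0r addr0.
- apply: (twice_derivable_pot_loc (c := fun q => 2 * q.1 0 l)) => q s.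
  exact: sum_abs2_ex.
- apply: (twice_derivable_pot_loc (c := fun q => 2 * q.2 0 l)) => q s.
  exact: sum_abs2_ey.
by move=> q; exact: (@cplx_hessian_laplacian_gt0 _ _ _ q l (Phi_adm j q)).
Qed.

Lemma pot_loc_le_ones q : (forall i, abs2 (toC q 0 i) <= 1) ->
  pot_loc a Phi j q <= pot_loc a Phi j (const_mx 1, 0).
Proof.
move=> q_disk; apply: le_const_coordinatewise => [b l x y|i].
  exact: pot_loc_le_set_coord.
by have := q_disk i; rewrite /abs2 /toC mxE.
Qed.

End Chart.

Section ProjectiveSpace.
Variables (R : realType) (N : nat).

Lemma abs2M (u v : R[i]) : abs2 (u * v) = abs2 u * abs2 v.
Proof. by case: u => a b; case: v => c d; rewrite /abs2 /=; ring. Qed.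

Lemma abs2_gt0 (u : R[i]) : u != 0 -> 0 < abs2 u.
Proof.
case: u => a b u_neq0; rewrite lt_def addr_ge0 ?sqr_ge0 // andbT.
apply: contra u_neq0; rewrite paddr_eq0 ?sqr_ge0 // !sqrf_eq0 /=.
by case/andP=> /eqP -> /eqP ->.
Qed.

Lemma abs2_1 : abs2 (1 : R[i]) = 1.
Proof. by rewrite /abs2 /= expr1n expr0n addr0. Qed.

Lemma chart_ones (j : 'I_N) :
  chart j (toC ((const_mx 1, 0) : 'rV[R]_N.-1 * 'rV[R]_N.-1)) = onesC R N.
Proof. by apply/rowP => p; rewrite !mxE; case: (unliftP j p) => [i _|_]; rewrite ?mxE. Qed.

Lemma sum_abs2_ones : sum_abs2 ((const_mx 1, 0) : 'rV[R]_N.-1 * 'rV[R]_N.-1) = N.-1%:R.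
Proof.
rewrite /sum_abs2 (eq_bigr (fun _ => 1)) ?sumr_const ?card_ord // => i _.
by rewrite /abs2 /toC !mxE /= expr1n expr0n addr0.
Qed.

Lemma chart_of_max_coord (z : 'rV[R[i]]_N) : z != 0 ->
  exists (j : 'I_N) (c : R[i]) (q : 'rV[R]_N.-1 * 'rV[R]_N.-1),
  [/\ c != 0, c *: z = chart j (toC q) & forall i, abs2 (toC q 0 i) <= 1].
Proof.
move=> z_neq0.
have [p0 zp0_neq0] : exists p, z 0 p != 0.
  apply/existsP; apply: contraR z_neq0 => /existsPn zero_coords.
  by apply/eqP/rowP => p; rewrite mxE; apply/eqP/negPn.
have [j _ j_max] := @arg_maxP _ _ _ p0 xpredT (fun p => abs2 (z 0 p)) isT.
have zj_gt0 : 0 < abs2 (z 0 j) := lt_le_trans (abs2_gt0 zp0_neq0) (j_max p0 isT).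
have zj_neq0 : z 0 j != 0 by apply: contraTneq zj_gt0 => ->; rewrite /abs2 /= expr0n addr0 ltxx.
set c := (z 0 j)^-1.
pose q := (\row_i complex.Re (c * z 0 (lift j i)), \row_i complex.Im (c * z 0 (lift j i))).
have toC_q i : toC q 0 i = c * z 0 (lift j i) by rewrite !mxE; case: (c * _).
exists j, c, q; split; first by rewrite invr_eq0.
  apply/rowP => p; rewrite !mxE; case: (unliftP j p) => [i ->|->]; first by rewrite toC_q.
  by rewrite mulVf.
have abs2_c : abs2 c = (abs2 (z 0 j))^-1.
  apply: (mulIf (lt0r_neq0 zj_gt0)).
  by rewrite -abs2M /c mulVf // abs2_1 mulVf // lt0r_neq0.
move=> i; rewrite toC_q abs2M abs2_c mulrC -[1](mulfV (lt0r_neq0 zj_gt0)).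
by rewrite ler_pM2r ?invr_gt0 //; exact: j_max.
Qed.

Lemma onesC_neq0 : (0 < N)%N -> onesC R N != 0.
Proof.
move=> N_gt0; apply/negP => /eqP/rowP/(_ (Ordinal N_gt0)).
by rewrite !mxE => /eqP; rewrite oner_eq0.
Qed.

Lemma pot_loc_ones (a : R) (Phi : 'rV[R[i]]_N -> R) (j : 'I_N) :
  pot_loc a Phi j (const_mx 1, 0) = a * ln N%:R + Phi (onesC R N).
Proof.
rewrite /pot_loc /phi_loc chart_ones -/(sum_abs2 _) sum_abs2_ones.
by rewrite (addrC 1) natr1 prednK // (leq_ltn_trans _ (ltn_ord j)).
Qed.

Lemma psi_ones (a : R) : (0 < N)%N -> psi a (onesC R N) = - (a * ln N%:R).
Proof.
move=> N_gt0; rewrite /psi.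
rewrite big1 => [|p _]; last by rewrite mxE /cabs abs2_1 sqrtr1.
rewrite (eq_bigr (fun _ => 1)) => [|p _]; last by rewrite mxE abs2_1.
by rewrite sumr_const card_ord powR1 mul1r lnV ?ln_powR // posrE powR_gt0 // ltr0n.
Qed.

Lemma le_Phi_ones (a : R) (Phi : 'rV[R[i]]_N -> R) : 0 < a ->
  homogeneous0 Phi -> smooth_on_P Phi -> admissible a Phi ->
  (forall p th z, Phi (rot_act p th z) = Phi z) ->
  forall z, z != 0 -> Phi z <= Phi (onesC R N) + a * ln N%:R.
Proof.
move=> a_gt0 Phi_hom Phi_smooth Phi_adm Phi_rot z z_neq0.
have [j [c [q [c_neq0 cz q_disk]]]] := chart_of_max_coord z_neq0.
have := pot_loc_le_ones j Phi_rot Phi_smooth Phi_adm q_disk.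
rewrite pot_loc_ones {1}/pot_loc /phi_loc -cz Phi_hom // addrC.
have : 0 <= a * ln (1 + sum_abs2 q).
  by apply: mulr_ge0; [exact: ltW | apply: ln_ge0; rewrite lerDl sum_abs2_ge0].
rewrite -/(sum_abs2 q); lra.
Qed.

End ProjectiveSpace.

Local Close Scope complex_scope.

Theorem lemma4 (R : realType) (k n : nat) (a : R) (Phi : 'rV[R[i]]_(k * n) -> R) :
  (1 <= k)%N -> (1 <= n)%N -> 0 < a ->
  homogeneous0 Phi ->
  smooth_on_P Phi ->
  admissible a Phi ->
  Gnk_invariant Phi ->
  sup (Phi @` [set z | z != 0]) = 0 ->
  0 <= Phi (onesC R (k * n)) - psi a (onesC R (k * n)).
Proof.
move=> k_gt0 n_gt0 a_gt0 Phi_hom Phi_smooth Phi_adm Phi_inv sup_Phi.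
have N_gt0 : (0 < k * n)%N by rewrite muln_gt0 k_gt0 n_gt0.
have Phi_rot p th z : Phi (rot_act p th z) = Phi z by apply: Phi_inv; exact: Gnk_rot.
rewrite psi_ones // opprK -sup_Phi; apply: ge_sup.
  by exists (Phi (onesC R (k * n))), (onesC R (k * n)) => //; exact: onesC_neq0.
by move=> _ [z z_neq0 <-]; exact: le_Phi_ones.
Qed.
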